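(* The logic $\mathsf{sICL}=\mathsf{ICK}\oplus(q\to(p\mathrel{\Box\!\!\!\rightarrow} q))\oplus((p\mathrel{\Box\!\!\!\rightarrow}(p\mathrel{\Box\!\!\!\rightarrow} q))\to(p\mathrel{\Box\!\!\!\rightarrow} q))$ is sound and complete with respect to the class of conditional frames $(X,\leq,\mathcal{R})$ such that for all $x,y\in X$ and $R_a\in\mathcal{R}$: $xR_ay$ implies $x\leq y$, and $xR_ay$ implies $x(R_a\circ R_a\circ\leq)y$.
   Context: Formulas: $\phi ::= p\mid\bot\mid\phi\wedge\phi\mid\phi\vee\phi\mid\phi\to\phi\mid\phi\mathrel{\Box\!\!\!\rightarrow}\phi$. $\mathsf{ICK}\oplus\Gamma$ is the smallest set containing intuitionistic propositional logic, $\Gamma$, $(p\mathrel{\Box\!\!\!\rightarrow}(q\wedge r))\leftrightarrow((p\mathrel{\Box\!\!\!\rightarrow} q)\wedge(p\mathrel{\Box\!\!\!\rightarrow} r))$ and $(p\mathrel{\Box\!\!\!\rightarrow}\top)\leftrightarrow\top$, closed under uniform substitution, modus ponens and congruence rules for both arguments of $\mathrel{\Box\!\!\!\rightarrow}$. A conditional frame is $(X,\leq,\mathcal{R})$, $(X,\leq)$ a nonempty preorder, $\mathcal{R}=\{R_a\mid a\text{ an upset}\}$ with $(\leq\circ R_a)\subseteq(R_a\circ\leq)$; valuations assign upsets to letters and $x\models\phi\mathrel{\Box\!\!\!\rightarrow}\psi$ iff every $y$ with $xR_{V(\phi)}y$ satisfies $\psi$. Relation composition $R\circ S$ relates $x$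 to $z$ if $xRy$ and $ySz$ for some $y$. *)

Inductive form : Type :=
| Var  : nat -> form
| Bot  : form
| And  : form -> form -> form
| Or   : form -> form -> form
| Imp  : form -> form -> form
| Cond : form -> form -> form.

Definition Top : form := Imp Bot Bot.
Definition Iff (a b : form) : form := And (Imp a b) (Imp b a).

Fixpoint subst (s : nat -> form) (f : form) : form :=
  match f with
  | Var n => s n
  | Bot => Bot
  | And a b => And (subst s a) (subst s b)
  | Or a b => Or (subst s a) (subst s b)
  | Imp a b => Imp (subst s a) (subst s b)
  | Cond a b => Cond (subst s a) (subst s b)
  end.

Definition p : form := Var 0.
Definition q : form := Var 1.
Definition r : form := Var 2.

(* ICK (+) Gam : smallest set containing IPC (given by a complete Hilbert
   axiomatisation, all instances over the full language), Gam, the two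
   conditional axioms, closed under uniform substitution, modus ponens and
   congruence in both arguments of []->. *)
Inductive ICK (Gam : form -> Prop) : form -> Prop :=
| ipc_K  : forall a b, ICK Gam (Imp a (Imp b a))
| ipc_S  : forall a b c,
    ICK Gam (Imp (Imp a (Imp b c)) (Imp (Imp a b) (Imp a c)))
| ipc_andE1 : forall a b, ICK Gam (Imp (And a b) a)
| ipc_andE2 : forall a b, ICK Gam (Imp (And a b) b)
| ipc_andI  : forall a b, ICK Gam (Imp a (Imp b (And a b)))
| ipc_orI1  : forall a b, ICK Gam (Imp a (Or a b))
| ipc_orI2  : forall a b, ICK Gam (Imp b (Or a b))
| ipc_orE   : forall a b c,
    ICK Gam (Imp (Imp a c) (Imp (Imp b c) (Imp (Or a b) c)))
| ipc_efq   : forall a, ICK Gam (Imp Bot a)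
| ax_cond_and : ICK Gam (Iff (Cond p (And q r)) (And (Cond p q) (Cond p r)))
| ax_cond_top : ICK Gam (Iff (Cond p Top) Top)
| ax_gam : forall a, Gam a -> ICK Gam a
| rule_subst : forall s a, ICK Gam a -> ICK Gam (subst s a)
| rule_mp : forall a b, ICK Gam (Imp a b) -> ICK Gam a -> ICK Gam b
| rule_congL : forall a b c, ICK Gam (Iff a b) -> ICK Gam (Iff (Cond a c) (Cond b c))
| rule_congR : forall a b c, ICK Gam (Iff a b) -> ICK Gam (Iff (Cond c a) (Cond c b)).

Inductive sICL_ax : form -> Prop :=
| sicl_1 : sICL_ax (Imp q (Cond p q))
| sicl_2 : sICL_ax (Imp (Cond p (Cond p q)) (Cond p q)).

Definition sICL : form -> Prop := ICK sICL_ax.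

Definition upset {X : Type} (le : X -> X -> Prop) (a : X -> Prop) : Prop :=
  forall x y, le x y -> a x -> a y.

(* A conditional frame (X, le, R): R a is the relation R_a, only relevant
   (and only constrained) for upsets a. *)
Definition cond_frame (X : Type) (le : X -> X -> Prop)
    (R : (X -> Prop) -> X -> X -> Prop) : Prop :=
  inhabited X /\
  (forall x, le x x) /\
  (forall x y z, le x y -> le y z -> le x z) /\
  (forall a, upset le a -> forall x y z, le x y -> R a y z ->
     exists w, R a x w /\ le w z).

Definition sICL_frame (X : Type) (le : X -> X -> Prop)
    (R : (X -> Prop) -> X -> X -> Prop) : Prop :=
  forall a, upset le a ->
    (forall x y, R a x y -> le x y) /\
    (forall x y, R a x y -> exists u v, R a x u /\ R a u v /\ le v y).

Fixpoint sat {X : Type} (le : X -> X -> Prop) (R : (X -> Prop) -> X -> X -> Prop)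
    (V : nat -> X -> Prop) (x : X) (f : form) : Prop :=
  match f with
  | Var n => V n x
  | Bot => False
  | And a b => sat le R V x a /\ sat le R V x b
  | Or a b => sat le R V x a \/ sat le R V x b
  | Imp a b => forall y, le x y -> sat le R V y a -> sat le R V y b
  | Cond a b => forall y, R (fun z => sat le R V z a) x y -> sat le R V y b
  end.

Definition sICL_valid (f : form) : Prop :=
  forall (X : Type) (le : X -> X -> Prop) (R : (X -> Prop) -> X -> X -> Prop)
         (V : nat -> X -> Prop),
    cond_frame X le R -> sICL_frame X le R ->
    (forall n, upset le (V n)) ->
    forall x, sat le R V x f.

(* Soundness: on these frames [q -> (p []-> q)] is valid because [R_a] is
   contained in [<=], and [(p []-> (p []-> q)) -> (p []-> q)] because every
   [R_a]-step factors as two [R_a]-steps followed by [<=].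
   Completeness: the worlds of the canonical model of any [ICK (+) Gam] are
   the prime theories, ordered by inclusion, with [x R_A y] iff [A] is the
   truth set of some [phi] and [y] contains the filter
   [{c | phi []-> c in x}].  The first sICL axiom makes the filter of [x]
   contain [x], and the second one makes it avoid every [phi []-> c] with
   [c] outside [y]; a Lindenbaum extension of the filter is then the
   intermediate world of the second frame condition. *)

From Stdlib Require Import Classical FunctionalExtensionality PropExtensionality Cantor Lia.

Lemma pred_ext {A : Type} (P Q : A -> Prop) : (forall z, P z <-> Q z) -> P = Q.
Proof.
  intro H; apply functional_extensionality; intro z; apply propositional_extensionality, H.
Qed.

(** * Soundness *)

Section Semantics.

Variables (X : Type) (le : X -> X -> Prop) (R : (X -> Prop) -> X -> X -> Prop).

Lemma sat_upset (V : nat -> X -> Prop) :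
  cond_frame X le R -> (forall n, upset le (V n)) ->
  forall f, upset le (fun x => sat le R V x f).
Proof.
  intros (_ & Hrefl & Htrans & HRle) HV f.
  induction f; simpl; intros x y Hxy H.
  - exact (HV n x y Hxy H).
  - exact H.
  - destruct H; split; eauto.
  - destruct H; [left | right]; eauto.
  - intros z Hyz; apply H; eauto.
  - intros z Hyz.
    destruct (HRle _ IHf1 x y z Hxy Hyz) as (w & Hxw & Hwz).
    eapply IHf2; eauto.
Qed.

Lemma sat_subst (V : nat -> X -> Prop) s a x :
  sat le R V x (subst s a) <-> sat le R (fun n y => sat le R V y (s n)) x a.
Proof.
  revert x; induction a; simpl; intro x.
  - reflexivity.
  - reflexivity.
  - rewrite IHa1, IHa2; reflexivity.
  - rewrite IHa1, IHa2; reflexivity.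
  - split; intros H y Hxy Ha; apply IHa2, H, IHa1; auto.
  - rewrite (pred_ext _ _ IHa1); split; intros H y Hy; apply IHa2; auto.
Qed.

End Semantics.

Lemma sICL_ax_valid a : sICL_ax a -> sICL_valid a.
Proof.
  intros Ha X le R V _ HS HV x.
  destruct (HS _ (HV 0)) as [HRle HRdense].
  destruct Ha; simpl.
  - intros y _ Hq z Hyz; exact (HV 1 y z (HRle y z Hyz) Hq).
  - intros y _ H z Hyz.
    destruct (HRdense y z Hyz) as (u & v & Hyu & Huv & Hvz).
    exact (HV 1 v z Hvz (H u Hyu v Huv)).
Qed.

Lemma sICL_sound f : sICL f -> sICL_valid f.
Proof.
  induction 1; intros X le R V HF HS HV x;
    pose proof (sat_upset X le R V HF HV) as Hup;
    pose proof HF as (_ & Hrefl & Htrans & _); unfold Iff, Top in *; simpl.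
  - intros y _ Ha z Hyz _; exact (Hup a y z Hyz Ha).
  - intros y1 _ H1 y2 H12 H2 y3 H23 Ha.
    exact (H1 y3 (Htrans _ _ _ H12 H23) Ha y3 (Hrefl _) (H2 y3 H23 Ha)).
  - intros y _ [A _]; exact A.
  - intros y _ [_ B]; exact B.
  - intros y1 _ Ha y2 H12 Hb; exact (conj (Hup a y1 y2 H12 Ha) Hb).
  - intros y _ Ha; left; exact Ha.
  - intros y _ Hb; right; exact Hb.
  - intros y1 _ H1 y2 H12 H2 y3 H23 [Ha | Hb].
    + exact (H1 y3 (Htrans _ _ _ H12 H23) Ha).
    + exact (H2 y3 H23 Hb).
  - intros y _ [].
  - split.
    + intros y _ H; split; intros z Hz; destruct (H z Hz); auto.
    + intros y _ [H1 H2] z Hz; split; auto.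
  - split.
    + intros y _ _ z _ H; exact H.
    + intros y _ _ z _ w _ [].
  - exact (sICL_ax_valid a H X le R V HF HS HV x).
  - apply sat_subst, IHICK; auto.
  - exact (IHICK1 X le R V HF HS HV x x (Hrefl x) (IHICK2 X le R V HF HS HV x)).
  - assert (Hab : forall z, sat le R V z a <-> sat le R V z b).
    { intro z; destruct (IHICK X le R V HF HS HV z) as [H1 H2].
      split; [apply H1 | apply H2]; auto. }
    rewrite (pred_ext _ _ Hab); split; intros y _ H0; exact H0.
  - split; intros y _ H0 z Hz; destruct (IHICK X le R V HF HS HV z) as [H1 H2].
    + exact (H1 z (Hrefl z) (H0 z Hz)).
    + exact (H2 z (Hrefl z) (H0 z Hz)).
Qed.

(** * Derivations in ICK (+) Gam *)

Section ICK_extension.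

Variable Gam : form -> Prop.
Local Notation thm := (ICK Gam).

Definition subst3 (a b c : form) : nat -> form :=
  fun n => match n with 0 => a | 1 => b | 2 => c | _ => Var n end.

Lemma thm_id a : thm (Imp a a).
Proof.
  apply (rule_mp _ (Imp a (Imp a a))); [| apply ipc_K].
  apply (rule_mp _ (Imp a (Imp (Imp a a) a))); [apply ipc_S | apply ipc_K].
Qed.

Lemma thm_and a b : thm a -> thm b -> thm (And a b).
Proof. intros Ha Hb; exact (rule_mp _ _ _ (rule_mp _ _ _ (ipc_andI _ a b) Ha) Hb). Qed.

Lemma thm_iff_l a b : thm (Iff a b) -> thm (Imp a b).
Proof. apply rule_mp, ipc_andE1. Qed.

Lemma thm_iff_r a b : thm (Iff a b) -> thm (Imp b a).
Proof. apply rule_mp, ipc_andE2. Qed.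

Lemma thm_or_idem a : thm (Imp (Or a a) a).
Proof. exact (rule_mp _ _ _ (rule_mp _ _ _ (ipc_orE _ a a a) (thm_id a)) (thm_id a)). Qed.

Lemma thm_cond_and a b c : thm (Iff (Cond a (And b c)) (And (Cond a b) (Cond a c))).
Proof. exact (rule_subst _ (subst3 a b c) _ (ax_cond_and _)). Qed.

Lemma thm_cond_top a : thm (Cond a Top).
Proof.
  apply (rule_mp _ Top); [| apply ipc_efq].
  exact (thm_iff_r _ _ (rule_subst _ (subst3 a a a) _ (ax_cond_top _))).
Qed.

Inductive derivable (G : form -> Prop) : form -> Prop :=
| der_hyp : forall a, G a -> derivable G a
| der_thm : forall a, thm a -> derivable G a
| der_mp : forall a b, derivable G (Imp a b) -> derivable G a -> derivable G b.

Definition add (G : form -> Prop) (a : form) : form -> Prop := fun x => G x \/ x = a.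

Lemma derivable_mono (G G' : form -> Prop) a :
  (forall x, G x -> G' x) -> derivable G a -> derivable G' a.
Proof.
  intros HG D; induction D.
  - apply der_hyp; auto.
  - apply der_thm; auto.
  - eapply der_mp; eauto.
Qed.

Lemma der_mp_thm G a b : thm (Imp a b) -> derivable G a -> derivable G b.
Proof. intro Hab; apply der_mp, der_thm, Hab. Qed.

Lemma der_mp_thm2 G a b c :
  thm (Imp a (Imp b c)) -> derivable G a -> derivable G b -> derivable G c.
Proof. intros Habc Ha; apply der_mp, (der_mp_thm _ _ _ Habc Ha). Qed.

Lemma deduction G a b : derivable (add G a) b -> derivable G (Imp a b).
Proof.
  intro D; induction D as [b [Hb | ->] | b Hb | b c _ IH1 _ IH2].
  - apply (der_mp_thm _ b); [apply ipc_K | apply der_hyp, Hb].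
  - apply der_thm, thm_id.
  - apply (der_mp_thm _ b); [apply ipc_K | apply der_thm, Hb].
  - exact (der_mp_thm2 _ _ _ _ (ipc_S _ a b c) IH1 IH2).
Qed.

Lemma der_imp_trans G a b c : derivable G (Imp a b) -> thm (Imp b c) -> derivable G (Imp a c).
Proof.
  intros Hab Hbc; apply deduction, (der_mp_thm _ _ _ Hbc), (der_mp _ a).
  - revert Hab; apply derivable_mono; intros x Hx; left; exact Hx.
  - apply der_hyp; right; reflexivity.
Qed.

Lemma thm_of_derivable a : derivable (fun _ => False) a -> thm a.
Proof.
  intro D; induction D as [a [] | a Ha | a b _ IH1 _ IH2].
  - exact Ha.
  - exact (rule_mp _ _ _ IH1 IH2).
Qed.

Lemma thm_imp_intro a b : derivable (eq a) b -> thm (Imp a b).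
Proof.
  intro D; apply thm_of_derivable, deduction.
  revert D; apply derivable_mono; intros x ->; right; reflexivity.
Qed.

Lemma thm_cond_mono a b c : thm (Imp a b) -> thm (Imp (Cond c a) (Cond c b)).
Proof.
  intro Hab.
  assert (Ha : thm (Iff a (And a b))).
  { apply thm_and; [apply thm_imp_intro | apply ipc_andE1].
    apply (der_mp_thm2 _ a b); [apply ipc_andI | | apply (der_mp_thm _ a _ Hab)];
      apply der_hyp; reflexivity. }
  apply thm_imp_intro.
  apply (der_mp_thm _ _ _ (ipc_andE2 _ (Cond c a) (Cond c b))),
        (der_mp_thm _ _ _ (thm_iff_l _ _ (thm_cond_and c a b))),
        (der_mp_thm _ _ _ (thm_iff_l _ _ (rule_congR _ _ _ c Ha))).
  apply der_hyp; reflexivity.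
Qed.

Lemma thm_cond_nec a b : thm b -> thm (Cond a b).
Proof.
  intro Hb; apply (rule_mp _ (Cond a Top)); [apply thm_cond_mono | apply thm_cond_top].
  exact (rule_mp _ _ _ (ipc_K _ b Top) Hb).
Qed.

Lemma thm_cond_congL a a' c :
  thm (Imp a a') -> thm (Imp a' a) -> thm (Imp (Cond a c) (Cond a' c)).
Proof. intros H1 H2; apply thm_iff_l, rule_congL, thm_and; assumption. Qed.

Lemma thm_cond_or a b c : thm (Imp (Or (Cond a b) (Cond a c)) (Cond a (Or b c))).
Proof.
  apply (rule_mp _ _ _ (rule_mp _ _ _ (ipc_orE _ _ _ _) (thm_cond_mono _ _ a (ipc_orI1 _ b c)))).
  apply thm_cond_mono, ipc_orI2.
Qed.

Lemma thm_and_mp a b : thm (Imp (And (Imp a b) a) b).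
Proof.
  apply thm_imp_intro, (der_mp _ a).
  - apply (der_mp_thm _ _ _ (ipc_andE1 _ _ a)), der_hyp; reflexivity.
  - apply (der_mp_thm _ _ _ (ipc_andE2 _ (Imp a b) _)), der_hyp; reflexivity.
Qed.

Lemma cond_filter_closed (T : form -> Prop) phi a :
  (forall b, derivable T b -> T b) ->
  derivable (fun c => T (Cond phi c)) a -> T (Cond phi a).
Proof.
  intros HT D; induction D as [a Ha | a Ha | a b _ IH1 _ IH2].
  - exact Ha.
  - apply HT, der_thm, thm_cond_nec, Ha.
  - apply HT, (der_mp_thm _ _ _ (thm_cond_mono _ _ phi (thm_and_mp a b))),
      (der_mp_thm _ _ _ (thm_iff_r _ _ (thm_cond_and _ _ _))),
      (der_mp_thm2 _ _ _ _ (ipc_andI _ _ _)); apply der_hyp; assumption.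
Qed.

(** * Prime theories and the Lindenbaum lemma *)

Record ptheory (T : form -> Prop) : Prop := {
  pt_closed : forall a, derivable T a -> T a;
  pt_consistent : ~ T Bot;
  pt_prime : forall a b, T (Or a b) -> T a \/ T b }.

Record world := { wth :> form -> Prop; wth_prime : ptheory wth }.

Fixpoint form_to_nat (f : form) : nat :=
  match f with
  | Var n => to_nat (0, n)
  | Bot => to_nat (1, 0)
  | And a b => to_nat (2, to_nat (form_to_nat a, form_to_nat b))
  | Or a b => to_nat (3, to_nat (form_to_nat a, form_to_nat b))
  | Imp a b => to_nat (4, to_nat (form_to_nat a, form_to_nat b))
  | Cond a b => to_nat (5, to_nat (form_to_nat a, form_to_nat b))
  end.

Lemma to_nat_inj x y : to_nat x = to_nat y -> x = y.
Proof. intro H; apply (f_equal of_nat) in H; rewrite !cancel_of_to in H; exact H. Qed.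

Lemma form_to_nat_inj f g : form_to_nat f = form_to_nat g -> f = g.
Proof.
  revert g; induction f; destruct g; intro H; cbn [form_to_nat] in H; apply to_nat_inj in H;
    try discriminate; try reflexivity; try (injection H as H; subst; reflexivity);
    apply (f_equal snd) in H; cbn [snd] in H; apply to_nat_inj in H;
    injection H as H1 H2; f_equal; auto.
Qed.

Section Lindenbaum.

Variables G Delta : form -> Prop.
Hypothesis Delta_or :
  forall d1 d2, Delta d1 -> Delta d2 -> exists d, Delta d /\ thm (Imp (Or d1 d2) d).
Hypothesis G_avoids : forall d, Delta d -> ~ derivable G d.

Definition hits (S : form -> Prop) : Prop := exists d, Delta d /\ derivable S d.

Fixpoint stage (n : nat) : form -> Prop :=
  match n with
  | 0 => G
  | S m => fun x => stage m x \/ (form_to_nat x = m /\ ~ hits (add (stage m) x))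
  end.

Lemma stage_mono n m : n <= m -> forall x, stage n x -> stage m x.
Proof. induction 1; auto. intros x Hx; left; auto. Qed.

Lemma stage_avoids n : ~ hits (stage n).
Proof.
  induction n as [| n IH]; intros (d & Hd & Hder).
  - exact (G_avoids d Hd Hder).
  - destruct (classic (exists x, form_to_nat x = n /\ ~ hits (add (stage n) x)))
      as [(x & Hx & Hnx) | Hno].
    + apply Hnx; exists d; split; [exact Hd |].
      revert Hder; apply derivable_mono.
      intros y [Hy | [Hy _]]; [left; exact Hy | right; apply form_to_nat_inj; congruence].
    + apply IH; exists d; split; [exact Hd |].
      revert Hder; apply derivable_mono.
      intros y [Hy | Hy]; [exact Hy | exfalso; apply Hno; exists y; exact Hy].
Qed.

Definition limit : form -> Prop := fun x => exists n, stage n x.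

Lemma derivable_limit a : derivable limit a -> exists n, derivable (stage n) a.
Proof.
  intro Hder; induction Hder as [a [n Hn] | a Ha | a b _ [n1 H1] _ [n2 H2]].
  - exists n; apply der_hyp, Hn.
  - exists 0; apply der_thm, Ha.
  - exists (Nat.max n1 n2).
    apply (der_mp _ a); [revert H1 | revert H2]; apply derivable_mono, stage_mono; lia.
Qed.

Lemma limit_avoids : ~ hits limit.
Proof.
  intros (d & Hd & Hder); destruct (derivable_limit _ Hder) as [n Hn].
  apply (stage_avoids n); exists d; split; assumption.
Qed.

(* [a] is decided at stage [form_to_nat a + 1]. *)
Lemma not_limit_derivable_imp a : ~ limit a -> exists d, Delta d /\ derivable limit (Imp a d).
Proof.
  intro Hn.
  assert (Hb : hits (add (stage (form_to_nat a)) a)).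
  { apply NNPP; intro Hb; apply Hn; exists (S (form_to_nat a)); right; split; auto. }
  destruct Hb as (d & Hd & Hder); exists d; split; [exact Hd |].
  apply deduction in Hder; revert Hder.
  apply derivable_mono; intros x Hx; exists (form_to_nat a); exact Hx.
Qed.

Lemma limit_closed a : derivable limit a -> limit a.
Proof.
  intro Ha; apply NNPP; intro Hn.
  destruct (not_limit_derivable_imp a Hn) as (d & Hd & Hder).
  apply limit_avoids; exists d; split; [exact Hd | exact (der_mp _ _ _ Hder Ha)].
Qed.

Lemma limit_prime a b : limit (Or a b) -> limit a \/ limit b.
Proof.
  intro Hab; apply NNPP; intro Hn.
  destruct (not_limit_derivable_imp a) as (d1 & Hd1 & H1); [intro; apply Hn; auto |].
  destruct (not_limit_derivable_imp b) as (d2 & Hd2 & H2); [intro; apply Hn; auto |].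
  destruct (Delta_or d1 d2 Hd1 Hd2) as (d & Hd & Hdd).
  apply limit_avoids; exists d; split; [exact Hd |].
  apply (der_mp_thm _ _ _ Hdd), (der_mp _ (Or a b)); [| apply der_hyp, Hab].
  apply (der_mp _ (Imp b (Or d1 d2))), (der_imp_trans _ _ _ _ H2), ipc_orI2.
  apply (der_mp _ (Imp a (Or d1 d2))), (der_imp_trans _ _ _ _ H1), ipc_orI1.
  apply der_thm, ipc_orE.
Qed.

Lemma lindenbaum : (exists d, Delta d) ->
  exists w : world, (forall x, G x -> w x) /\ (forall d, Delta d -> ~ w d).
Proof.
  intros [d0 Hd0].
  assert (Hlim : forall d, Delta d -> ~ limit d).
  { intros d Hd Hl; apply limit_avoids; exists d; split; [exact Hd | apply der_hyp, Hl]. }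
  assert (Hpt : ptheory limit).
  { split; [exact limit_closed | | exact limit_prime].
    intro Hbot; apply (Hlim d0 Hd0), limit_closed.
    apply (der_mp_thm _ _ _ (ipc_efq _ d0)), der_hyp, Hbot. }
  exists (Build_world limit Hpt); split; [intros x Hx; exists 0; exact Hx | exact Hlim].
Qed.

End Lindenbaum.

Lemma extend_avoiding G a : ~ derivable G a ->
  exists w : world, (forall x, G x -> w x) /\ ~ w a.
Proof.
  intro Ha; destruct (lindenbaum G (eq a)) as (w & HGw & Hw).
  - intros d1 d2 <- <-; exists a; split; [reflexivity | apply thm_or_idem].
  - intros d <-; exact Ha.
  - exists a; reflexivity.
  - exists w; split; [exact HGw | exact (Hw a eq_refl)].
Qed.

(** * The canonical model *)

Lemma world_closed (w : world) a : derivable w a -> w a.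
Proof. apply pt_closed, wth_prime. Qed.

Lemma world_mp_thm (w : world) a b : thm (Imp a b) -> w a -> w b.
Proof. intros Hab Ha; apply world_closed, (der_mp_thm _ _ _ Hab), der_hyp, Ha. Qed.

Definition wle (w w' : world) : Prop := forall a, w a -> w' a.

Definition wR (A : world -> Prop) (w w' : world) : Prop :=
  exists phi, (forall z, A z <-> z phi) /\ (forall c, w (Cond phi c) -> w' c).

Definition wV (n : nat) (w : world) : Prop := w (Var n).

Lemma world_and (w : world) a b : w (And a b) <-> w a /\ w b.
Proof.
  split.
  - intro Hab; split.
    + exact (world_mp_thm _ _ _ (ipc_andE1 _ a b) Hab).
    + exact (world_mp_thm _ _ _ (ipc_andE2 _ a b) Hab).
  - intros [Ha Hb]; apply world_closed, (der_mp_thm2 _ _ _ _ (ipc_andI _ a b));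
      apply der_hyp; assumption.
Qed.

Lemma world_or (w : world) a b : w (Or a b) <-> w a \/ w b.
Proof.
  split; [apply pt_prime, wth_prime |].
  intros [Ha | Hb].
  - exact (world_mp_thm _ _ _ (ipc_orI1 _ a b) Ha).
  - exact (world_mp_thm _ _ _ (ipc_orI2 _ a b) Hb).
Qed.

Lemma world_imp (w : world) a b : w (Imp a b) <-> forall w', wle w w' -> w' a -> w' b.
Proof.
  split.
  - intros Hab w' Hle Ha; apply world_closed, (der_mp _ a); apply der_hyp; auto.
  - intro H; apply NNPP; intro Hn.
    destruct (extend_avoiding (add w a) b) as (w' & Hw' & Hb).
    { intro Hder; apply Hn, world_closed, deduction, Hder. }
    apply Hb, H; [intros x Hx | ]; apply Hw'; [left | right]; auto.
Qed.

Lemma world_cond (w : world) phi c :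
  w (Cond phi c) <-> forall w' : world, (forall c', w (Cond phi c') -> w' c') -> w' c.
Proof.
  split; [intros Hc w' Hw'; exact (Hw' c Hc) |].
  intro H; apply NNPP; intro Hn.
  destruct (extend_avoiding (fun c' => w (Cond phi c')) c) as (w' & Hw' & Hc).
  { intro Hder; apply Hn, cond_filter_closed, Hder; apply world_closed. }
  exact (Hc (H w' Hw')).
Qed.

Lemma thm_of_worlds a b : (forall w : world, w a -> w b) -> thm (Imp a b).
Proof.
  intro H; apply NNPP; intro Hn.
  destruct (extend_avoiding (eq a) b) as (w & Hw & Hb).
  { intro Hder; apply Hn, thm_imp_intro, Hder. }
  exact (Hb (H w (Hw a eq_refl))).
Qed.

Lemma truth f (w : world) : sat wle wR wV w f <-> w f.
Proof.
  revert w; induction f as [n | | a IHa b IHb | a IHa b IHb | a IHa b IHb | a IHa b IHb];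
    intro w; simpl.
  - reflexivity.
  - split; [intros [] | apply pt_consistent, wth_prime].
  - rewrite IHa, IHb, world_and; reflexivity.
  - rewrite IHa, IHb, world_or; reflexivity.
  - rewrite world_imp; setoid_rewrite IHa; setoid_rewrite IHb; reflexivity.
  - split.
    + intro H; apply world_cond; intros w' Hw'.
      apply IHb, H; exists a; split; [exact IHa | exact Hw'].
    + intros Hab w' (phi & Hphi & Hfilter); apply IHb, Hfilter.
      assert (Haphi : forall z : world, z a <-> z phi).
      { intro z; rewrite <- Hphi, IHa; reflexivity. }
      apply (world_mp_thm _ (Cond a b)); [| exact Hab].
      apply thm_cond_congL; apply thm_of_worlds; apply Haphi.
Qed.

Lemma canonical_cond_frame : inhabited world -> cond_frame world wle wR.
Proof.
  intro Hw; split; [exact Hw | split; [| split]].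
  - intros w a Ha; exact Ha.
  - intros w1 w2 w3 H12 H23 a Ha; auto.
  - intros A _ w1 w2 w3 H12 (phi & Hphi & Hfilter).
    exists w3; split; [exists phi; split; auto | intros a Ha; exact Ha].
Qed.

End ICK_extension.

(** * Completeness of sICL *)

Lemma thm_sicl_refl a b : sICL (Imp b (Cond a b)).
Proof. exact (rule_subst _ (subst3 a b b) _ (ax_gam _ _ sicl_1)). Qed.

Lemma thm_sicl_trans a b : sICL (Imp (Cond a (Cond a b)) (Cond a b)).
Proof. exact (rule_subst _ (subst3 a b b) _ (ax_gam _ _ sicl_2)). Qed.

Lemma canonical_sICL_frame : sICL_frame (world sICL_ax) (wle sICL_ax) (wR sICL_ax).
Proof.
  intros A _; split.
  - intros w w' (phi & _ & Hfilter) a Ha.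
    exact (Hfilter a (world_mp_thm _ _ _ _ (thm_sicl_refl phi a) Ha)).
  - intros w w' (phi & Hphi & Hfilter).
    destruct (lindenbaum sICL_ax (fun c => w (Cond phi c))
                (fun d => exists c, d = Cond phi c /\ ~ w' c)) as (u & Hwu & Hu).
    + intros d1 d2 (c1 & -> & Hc1) (c2 & -> & Hc2).
      exists (Cond phi (Or c1 c2)); split; [| apply thm_cond_or].
      exists (Or c1 c2); split; [reflexivity |].
      intro Hc; destruct (proj1 (world_or _ _ _ _) Hc); auto.
    + intros d (c & -> & Hc) Hder; apply Hc, Hfilter.
      apply (world_mp_thm _ _ _ _ (thm_sicl_trans phi c)).
      apply (cond_filter_closed sICL_ax), Hder; apply world_closed.
    + exists (Cond phi Bot), Bot; split; [reflexivity | apply (pt_consistent sICL_ax), wth_prime].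
    + exists u, w'; split; [| split].
      * exists phi; split; [exact Hphi | exact Hwu].
      * exists phi; split; [exact Hphi |].
        intros c Hc; apply NNPP; intro Hn; exact (Hu _ (ex_intro _ c (conj eq_refl Hn)) Hc).
      * intros a Ha; exact Ha.
Qed.

Lemma sICL_complete f : sICL_valid f -> sICL f.
Proof.
  intro Hf; apply NNPP; intro Hn.
  destruct (extend_avoiding sICL_ax (fun _ => False) f) as (w & _ & Hw).
  { intro Hder; apply Hn, thm_of_derivable, Hder. }
  apply Hw, truth, Hf.
  - exact (canonical_cond_frame _ (inhabits w)).
  - exact canonical_sICL_frame.
  - intros n w1 w2 H12; apply H12.
Qed.

Theorem theorem7p17 : forall f : form, sICL f <-> sICL_valid f.
Proof. intro f; split; [apply sICL_sound | apply sICL_complete]. Qed.
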